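(* Let $k\ge1$ and let $X,Y$ be $k$-good random valuations with $\|X\|_1\le M$ and $\|Y\|_1\le M$ almost surely, for some $M\ge1$. Then \[ |\textsc{Rev}(X)-\textsc{Rev}(Y)|\le(2M+1)\sqrt{\mathrm{Dist}(X,Y)} . \]
   Context: $\|x\|_1=\sum_i|x_i|$. $\mathrm{Dist}(X,Y)$ is the Prohorov distance between the distributions of $X$ and $Y$ with respect to $\|\cdot\|_1$: the infimum of all $\rho>0$ such that $\mathbb{P}[X\in A]\le\mathbb{P}[Y\in B_\rho(A)]+\rho$ and $\mathbb{P}[Y\in A]\le\mathbb{P}[X\in B_\rho(A)]+\rho$ for all measurable $A$, where $B_\rho(A)=\{y:\|y-x\|_1<\rho\text{ for some }x\in A\}$. A $k$-good random valuation is a random vector in $\mathbb{R}_+^k$ (no independence assumed). A mechanism is a pair $\mu=(q,s)$ of Borel functions $q:\mathbb{R}_+^k\to[0,1]^k$, $s:\mathbb{R}_+^k\to\mathbb{R}$, with buyer payoff $b(x)=q(x)\cdot x-s(x)$; IR: $b(x)\ge0$ for all $x$; IC: $b(x)\ge q(\tilde x)\cdot x-s(\tilde x)$ for all $x,\tilde x$. $\textsc{Rev}(X)=\sup\mathbb{E}[s(X)]$ over all IC and IR mechanisms. *)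

From HB Require Import structures.
From mathcomp Require Import all_boot all_order all_algebra.
From mathcomp Require Import all_classical all_reals all_analysis.
Set Implicit Arguments. Unset Strict Implicit. Unset Printing Implicit Defensive.
Import Order.TTheory GRing.Theory Num.Theory.
Local Open Scope classical_set_scope.
Local Open Scope ring_scope.

(* Valuations are elements of k.-tuple R, carrying the library's product
   (Borel) sigma-algebra generated by the coordinate projections. *)

Definition nonneg_val (R : realType) (k : nat) (x : k.-tuple R) : Prop :=
  forall i : 'I_k, 0 <= tnth x i.

Definition norm1 (R : realType) (k : nat) (x : k.-tuple R) : R :=
  \sum_(i < k) `|tnth x i|.

Definition dotv (R : realType) (k : nat) (q x : k.-tuple R) : R :=
  \sum_(i < k) tnth q i * tnth x i.

Definition ball1 (R : realType) (k : nat) (A : set (k.-tuple R)) (rho : R)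
  : set (k.-tuple R) :=
  [set y | exists2 x, A x & \sum_(i < k) `|tnth y i - tnth x i| < rho].

Definition mechanism (R : realType) (k : nat)
  (q : k.-tuple R -> k.-tuple R) (s : k.-tuple R -> R) : Prop :=
  [/\ measurable_fun setT q, measurable_fun setT s,
      (forall x, nonneg_val x -> forall i, 0 <= tnth (q x) i <= 1),
      (forall x, nonneg_val x -> 0 <= dotv (q x) x - s x) &
      (forall x xt, nonneg_val x -> nonneg_val xt ->
                  dotv (q xt) x - s xt <= dotv (q x) x - s x)].

Definition Rev (R : realType) (k : nat) d (T : measurableType d)
  (P : probability T R) (X : T -> k.-tuple R) : \bar R :=
  ereal_sup [set r | exists q s, mechanism q s /\
                      r = (\int[P]_t (s (X t))%:E)%E].

Definition Dist (R : realType) (k : nat)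
  d1 (T1 : measurableType d1) (P1 : probability T1 R) (X : T1 -> k.-tuple R)
  d2 (T2 : measurableType d2) (P2 : probability T2 R) (Y : T2 -> k.-tuple R)
  : R :=
  inf [set rho : R | 0 < rho /\
        forall A : set (k.-tuple R), measurable A ->
          (P1 (X @^-1` A) <= P2 (Y @^-1` ball1 A rho) + rho%:E)%E /\
          (P2 (Y @^-1` A) <= P1 (X @^-1` ball1 A rho) + rho%:E)%E].

From mathcomp Require Import all_boot all_order all_algebra.
From mathcomp Require Import all_classical all_reals all_analysis.
From mathcomp Require Import ring lra measurable_realfun.
Set Implicit Arguments.
Unset Strict Implicit.
Unset Printing Implicit Defensive.
Import Order.TTheory GRing.Theory Num.Theory.
Local Open Scope classical_set_scope.
Local Open Scope ring_scope.

(* Fix a mechanism (q, s) for Y and e = sqrt rho < 1.  Running (q, s) on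
   x / (1 - e) and multiplying its payment by 1 - e is again IC and IR, and
   adding the IC constraints of (q, s) between y and x / (1 - e) gives
   s (x / (1 - e)) > s y - e whenever ||x - y||_1 < e^2.  Prohorov closeness
   therefore maps every upper level set of s(Y) into one of s(X / (1 - e)) up
   to probability rho, and the layer-cake formula turns this into
   E s(Y) <= E s(X / (1 - e)) + e + M rho.  The rescaled mechanism earns
   (1 - e) E s(X / (1 - e)) on X, which costs at most e M more. *)

Section tuples.
Context (R : realType) (k : nat).
Implicit Types (q x y : k.-tuple R) (c : R).

Definition zerot : k.-tuple R := [tuple 0 | _ < k].
Definition scalet c x : k.-tuple R := [tuple c * tnth x i | i < k].
Definition dist1 x y : R := \sum_(i < k) `|tnth x i - tnth y i|.

Lemma tnth_zerot i : tnth zerot i = 0.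
Proof. by rewrite tnth_mktuple. Qed.

Lemma tnth_scalet c x i : tnth (scalet c x) i = c * tnth x i.
Proof. by rewrite tnth_mktuple. Qed.

Lemma nonneg_val_zerot : nonneg_val zerot.
Proof. by move=> i; rewrite tnth_zerot. Qed.

Lemma nonneg_val_scalet c x : 0 <= c -> nonneg_val x -> nonneg_val (scalet c x).
Proof. by move=> c0 x0 i; rewrite tnth_scalet mulr_ge0. Qed.

Lemma dotv0r q : dotv q zerot = 0.
Proof. by rewrite /dotv big1 // => i _; rewrite tnth_zerot mulr0. Qed.

Lemma dotv0l x : dotv zerot x = 0.
Proof. by rewrite /dotv big1 // => i _; rewrite tnth_zerot mul0r. Qed.

Lemma dotvZr q c x : dotv q (scalet c x) = c * dotv q x.
Proof. by rewrite /dotv mulr_sumr; apply: eq_bigr => i _; rewrite tnth_scalet mulrCA. Qed.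

Lemma norm1Z c x : 0 <= c -> norm1 (scalet c x) = c * norm1 x.
Proof.
move=> c0; rewrite /norm1 mulr_sumr; apply: eq_bigr => i _.
by rewrite tnth_scalet normrM ger0_norm.
Qed.

Definition allocation q := forall i, 0 <= tnth q i <= 1.

Lemma dotv_ge0 q x : allocation q -> nonneg_val x -> 0 <= dotv q x.
Proof.
move=> q01 x0; apply: sumr_ge0 => i _.
by case/andP: (q01 i) => q0 _; rewrite mulr_ge0.
Qed.

Lemma dotv_le_norm1 q x : allocation q -> nonneg_val x -> dotv q x <= norm1 x.
Proof.
move=> q01 x0; apply: ler_sum => i _; have /andP[q0 q1] := q01 i.
by rewrite ger0_norm // ler_piMl.
Qed.

Lemma dotv_exchange_le_dist1 qx qy x y : allocation qx -> allocation qy ->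
  (dotv qx y - dotv qx x) + (dotv qy x - dotv qy y) <= dist1 x y.
Proof.
move=> qx01 qy01; rewrite /dotv -!sumrB -big_split /=; apply: ler_sum => i _.
have /andP[a0 a1] := qx01 i; have /andP[b0 b1] := qy01 i.
rewrite (_ : _ + _ = (tnth qx i - tnth qy i) * (tnth y i - tnth x i)); last by ring.
rewrite distrC (le_trans (ler_norm _)) // normrM ler_piMl //.
by rewrite ler_norml; apply/andP; split; lra.
Qed.

Lemma measurable_nonneg_val : measurable [set x : k.-tuple R | nonneg_val x].
Proof.
rewrite (_ : [set x | _] =
    \bigcap_(i in [set: 'I_k]) (fun x => tnth x i) @^-1` `[0, +oo[).
  apply: fin_bigcap_measurable => // i _; rewrite -[X in measurable X]setTI.
  exact: measurable_tnth.
apply/seteqP; split => x /= x0 i.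
  by move=> _; rewrite /preimage /= in_itv /= andbT.
by have := x0 i I; rewrite /preimage /= in_itv /= andbT.
Qed.

Lemma measurable_scalet c : measurable_fun setT (scalet c).
Proof.
apply/measurable_fun_tnthP => i.
rewrite (_ : _ \o _ = fun x => c * tnth x i); last first.
  by apply/funext => x /=; rewrite tnth_scalet.
by apply: measurable_funM => //; exact: measurable_tnth.
Qed.

End tuples.
Arguments zerot {R k}.
Arguments nonneg_val_zerot {R k}.

Lemma mechanism0 (R : realType) (k : nat) :
  mechanism (fun _ : k.-tuple R => zerot) (fun _ => 0).
Proof.
split => //.
- by move=> x _ i; rewrite tnth_zerot lexx ler01.
- by move=> x _; rewrite dotv0l subrr.
Qed.

Section mechanism.
Context (R : realType) (k : nat).
Context (q : k.-tuple R -> k.-tuple R) (s : k.-tuple R -> R).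
Hypothesis mech : mechanism q s.
Implicit Types (x y : k.-tuple R).

Lemma mechanism_alloc x : nonneg_val x -> allocation (q x).
Proof. by case: mech => _ _ + _ _; apply. Qed.

Lemma mechanism_IR x : nonneg_val x -> 0 <= dotv (q x) x - s x.
Proof. by case: mech => _ _ _ + _; apply. Qed.

Lemma mechanism_IC x y : nonneg_val x -> nonneg_val y ->
  dotv (q y) x - s y <= dotv (q x) x - s x.
Proof. by case: mech => _ _ _ _; apply. Qed.

Lemma payment_zerot_le0 : s zerot <= 0.
Proof. by have := mechanism_IR nonneg_val_zerot; rewrite dotv0r sub0r oppr_ge0. Qed.

Lemma payment_zerot_le x : nonneg_val x -> s zerot <= s x.
Proof.
by move=> x0; have := mechanism_IC nonneg_val_zerot x0; rewrite !dotv0r !sub0r lerN2.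
Qed.

Lemma payment_le_norm1 x : nonneg_val x -> s x <= norm1 x + s zerot.
Proof.
move=> x0; have := mechanism_IC x0 nonneg_val_zerot.
have := dotv_le_norm1 (mechanism_alloc x0) x0.
have := dotv_ge0 (mechanism_alloc nonneg_val_zerot) x0.
lra.
Qed.

(* Add the IC constraints between y and z = x / (1 - e), the one at z scaled by 1 - e. *)
Lemma payment_scalet_ge e x y : 0 < e -> e < 1 -> nonneg_val x -> nonneg_val y ->
  e * s y - dist1 x y <= e * s (scalet (1 - e)^-1 x).
Proof.
move=> e0 e1 x0 y0; set z := scalet _ x.
have e1' : 0 < 1 - e by rewrite subr_gt0.
have z0 : nonneg_val z by apply: nonneg_val_scalet x0; rewrite invr_ge0 ltW.
have ICyz := mechanism_IC y0 z0.
have := mechanism_IC z0 y0; rewrite /z !dotvZr => ICzy.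
have {}ICzy : dotv (q y) x - (1 - e) * s y <= dotv (q z) x - (1 - e) * s z.
  have := ler_wpM2l (ltW e1') ICzy.
  by rewrite !mulrBr !mulrA mulfV ?gt_eqF // !mul1r.
have := dotv_exchange_le_dist1 x y (mechanism_alloc y0) (mechanism_alloc z0).
lra.
Qed.

Lemma mechanism_scalet c : 0 < c ->
  mechanism (q \o scalet c) (fun x => s (scalet c x) / c).
Proof.
move=> c0; have sc0 x : nonneg_val x -> nonneg_val (scalet c x).
  by apply: nonneg_val_scalet; exact: ltW.
have dotvE x y : dotv (q y) x = dotv (q y) (scalet c x) / c.
  by rewrite dotvZr mulrAC mulfV ?gt_eqF ?mul1r.
case: mech => mq ms _ _ _; split.
- exact: measurableT_comp mq (measurable_scalet c).
- by apply: measurable_funM => //; exact: measurableT_comp ms (measurable_scalet c).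
- by move=> x x0; exact: mechanism_alloc (sc0 _ x0).
- move=> x x0; rewrite /= dotvE -mulrBl.
  by apply: divr_ge0; [exact: mechanism_IR (sc0 _ x0) | exact: ltW].
- move=> x y x0 y0; rewrite /= !(dotvE x) -!mulrBl.
  by apply: ler_wpM2r; [rewrite invr_ge0 ltW | exact: mechanism_IC (sc0 _ x0) (sc0 _ y0)].
Qed.

End mechanism.

Section ball.
Context (R : realType) (k : nat).
Implicit Types (x y z : k.-tuple R).

Lemma dist1C x y : dist1 x y = dist1 y x.
Proof. by apply: eq_bigr => i _; rewrite distrC. Qed.

Lemma dist1_triangle x y z : dist1 x z <= dist1 x y + dist1 y z.
Proof. by rewrite /dist1 -big_split /=; apply: ler_sum => i _; exact: ler_distD. Qed.

Lemma measurable_dist1 z : measurable_fun setT (fun x => dist1 x z).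
Proof.
apply: measurable_sum => i; apply: measurableT_comp => //.
by apply: measurable_funB => //; exact: measurable_tnth.
Qed.

Lemma dist1_rat_approx y eps : 0 < eps ->
  exists r : k.-tuple rat, dist1 y (map_tuple ratr r) < eps.
Proof.
move=> eps0; set delta := eps / k.+1%:R.
have delta0 : 0 < delta by rewrite divr_gt0.
have near_y i : exists q : rat, `|tnth y i - ratr q| < delta.
  have [q] := @rat_in_itvoo R (tnth y i - delta) (tnth y i + delta) ltac:(lra).
  rewrite in_itv /= => /andP[q1 q2]; exists q.
  by rewrite ltr_norml; apply/andP; split; lra.
have [r rP] := boolp.choice near_y.
exists [tuple r i | i < k]; rewrite /dist1.
apply: (@le_lt_trans _ _ (\sum_(i < k) delta)).
  by apply: ler_sum => i _; rewrite tnth_map tnth_mktuple ltW.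
rewrite sumr_const card_ord -mulr_natr /delta -mulrA gtr_pMr //.
by rewrite mulrC ltr_pdivrMr ?ltr0n // mul1r ltr_nat.
Qed.

(* Any l1-neighbourhood is a countable union of balls with rational centres and radii. *)
Lemma measurable_ball1 (A : set (k.-tuple R)) rho : measurable (ball1 A rho).
Proof.
pose near_A (p : k.-tuple rat * rat) :=
  exists2 x, A x & dist1 (map_tuple ratr p.1) x < rho - ratr p.2.
pose B p := [set y : k.-tuple R | near_A p /\ dist1 y (map_tuple ratr p.1) < ratr p.2].
have -> : ball1 A rho = \bigcup_p B p.
  rewrite (_ : ball1 A rho = [set y | exists2 x, A x & dist1 y x < rho]) //.
  apply/seteqP; split => [y [x Ax yx]|y [[c eta] _ [[x Ax cx] yc]]]; last first.
    exists x => //; have := dist1_triangle y (map_tuple ratr c) x.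
    by rewrite /= in cx yc; lra.
  set delta := rho - dist1 y x.
  have delta0 : 0 < delta by rewrite subr_gt0.
  have [c yc] := @dist1_rat_approx y (delta / 3) ltac:(lra).
  have [eta] := @rat_in_itvoo R (delta / 3) (2 * delta / 3) ltac:(lra).
  rewrite in_itv /= => /andP[eta1 eta2].
  exists (c, eta) => //; split => /=; last lra.
  exists x => //; have := dist1_triangle (map_tuple ratr c) y x.
  by rewrite /= (dist1C _ y) /delta in yc eta1 eta2 *; lra.
apply: countable_bigcupT_measurable => [|p]; first exact: countableP.
have [nA|nA] := pselect (near_A p).
  rewrite (_ : B p = [set y | dist1 y (map_tuple ratr p.1) < ratr p.2]).
    by rewrite -preimage_itvNyo -[X in measurable X]setTI; exact: measurable_dist1.
  by apply/seteqP; split => y /= => [[]//|?]; split.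
by rewrite (_ : B p = set0) //; apply/seteqP; split => y // [].
Qed.

End ball.

Section layer_cake.
Context (R : realType).
Local Open Scope ereal_scope.

Lemma measurable_superlevel_set d (T : measurableType d) (f : T -> R) (r : R) :
  measurable_fun setT f -> measurable [set t | (r < f t)%R].
Proof. by move=> mf; rewrite -preimage_itvoy -[X in measurable X]setTI; exact: mf. Qed.

Lemma ccdf_mfunE d (T : measurableType d) (P : probability T R) (f : T -> R)
    (mf : f \in mfun) (r : R) :
  ccdf (mfun_Sub mf : {RV P >-> R}) r = P [set t | (r < f t)%R].
Proof. by rewrite /ccdf /distribution /pushforward /= preimage_itvoy. Qed.

Lemma integral_indic_itv (W c : R) : (0 <= W)%R -> (0 <= c)%R ->
  \int[lebesgue_measure]_(r in `[0%R, +oo[) (c * \1_`[0%R, W[ r)%:E = (W * c)%:E.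
Proof.
move=> W0 c0; under eq_integral => r _ do rewrite EFinM.
rewrite ge0_integralZl_EFin //; last by apply/measurable_EFinP; exact: measurable_indic.
rewrite integral_indic // setIidl; last first.
  by move=> r /=; rewrite !in_itv /= andbT => /andP[].
have := lebesgue_measure_itv `[0%R, W[; rewrite /= lte_fin => ->.
by case: ltgtP W0 => // [W_gt0|<-] _; rewrite ?sube0 -EFinM mulrC // mulr0 mule0.
Qed.

(* Layer cake: E H is the integral over r >= 0 of P (H > r), which vanishes for r >= W. *)
Lemma expectation_le_of_tail_le d1 (T1 : measurableType d1) (P1 : probability T1 R)
    d2 (T2 : measurableType d2) (P2 : probability T2 R)
    (G : T1 -> R) (H : T2 -> R) (W rho : R) :
  measurable_fun setT G -> measurable_fun setT H -> (0 <= W)%R -> (0 <= rho)%R ->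
  (forall t, 0 <= G t)%R -> (forall t, 0 <= H t)%R ->
  {ae P2, forall t, H t <= W}%R ->
  (forall r, (0 <= r < W)%R ->
     P2 [set t | (r < H t)%R] <= P1 [set t | (r < G t)%R] + rho%:E) ->
  'E_P2[H] <= 'E_P1[G] + (W * rho)%:E.
Proof.
move=> mG mH W0 rho0 G0 H0 HW tail.
have mG' : G \in mfun by exact: mem_set.
have mH' : H \in mfun by exact: mem_set.
pose GV : {RV P1 >-> R} := mfun_Sub mG'.
pose HV : {RV P2 >-> R} := mfun_Sub mH'.
rewrite (@ge0_expectation_ccdf _ _ _ P2 HV) // (@ge0_expectation_ccdf _ _ _ P1 GV) //.
have mI : measurable_fun (`[0%R, +oo[%classic : set R)
    (fun r : R => (rho * \1_`[0%R, W[ r)%:E : \bar R).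
  by apply/measurable_EFinP/measurable_funM => //; exact: measurable_indic.
rewrite -integral_indic_itv // -ge0_integralD //; last 2 first.
- exact: measurable_funS measurableT (subsetT _) (ccdf_measurable GV).
- by move=> r _; rewrite lee_fin mulr_ge0.
apply: ge0_le_integral => //.
- exact: measurable_funS measurableT (subsetT _) (ccdf_measurable HV).
- apply: emeasurable_funD => //.
  exact: measurable_funS measurableT (subsetT _) (ccdf_measurable GV).
move=> r; rewrite /= in_itv /= andbT => r0; rewrite indicE !ccdf_mfunE.
have [rW|Wr] := ltP r W.
  by rewrite mem_set /= ?in_itv /= ?r0 // mulr1; apply: tail; rewrite r0.
have [N [mN PN0 HN]] := HW.
rewrite (_ : P2 _ = 0) ?adde_ge0 ?lee_fin ?mulr_ge0 //.
apply/eqP; rewrite eq_le measure_ge0 andbT -PN0.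
apply: le_measure; rewrite ?inE //; first exact: measurable_superlevel_set.
by move=> t /= Ht; apply: HN => /= HtW; lra.
Qed.

End layer_cake.

Section bounded_expectation.
Context (R : realType) d (T : measurableType d) (P : probability T R).
Context (f : T -> R) (a b : R).
Hypotheses (mf : measurable_fun setT f) (f_lb : forall t, a <= f t)
  (f_ub : {ae P, forall t, f t <= b}).

Lemma bounded_Lfun1 : f \in Lfun P 1.
Proof.
apply/Lfun1_integrable/integrableP; split; first exact/measurable_EFinP.
apply: (@le_lt_trans _ _ ((`|a| + `|b|)%:E * P setT)%E); last first.
  by rewrite probability_setT mule1 ltry.
apply: integral_le_bound => //; first exact/measurable_EFinP.
apply: filterS f_ub => t ft _; rewrite /comp abse_EFin lee_fin.
have := f_lb t; have := ler_norm b; have := ler_norm (- a).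
have := normr_ge0 a; have := normr_ge0 b.
by rewrite normrN ler_norml => *; apply/andP; split; lra.
Qed.

Lemma expectation_le_ub : a <= b -> ('E_P[f] <= b%:E)%E.
Proof.
move=> ab; have Lf := bounded_Lfun1.
have : ('E_P[f \- cst a] <= 'E_P[cst (b - a)%R])%E.
  apply: expectation_le => //; first exact: measurable_funB.
  - by move=> t; rewrite subr_ge0.
  - by move=> t; rewrite subr_ge0.
  - by apply: filterS f_ub => t ft /=; lra.
rewrite expectationB ?Lfun_cst // !expectation_cst.
move: (expectation_fin_num Lf); case: ('E_P[f])%E => // r _.
by rewrite -EFinB !lee_fin; lra.
Qed.

End bounded_expectation.

Section revenue.
Context (R : realType) (k : nat) d (T : measurableType d) (P : probability T R).
Context (X : T -> k.-tuple R).
Local Open Scope ereal_scope.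

Lemma le_Rev q s : mechanism q s -> 'E_P[s \o X] <= Rev P X.
Proof. by move=> mech; apply: ereal_sup_ubound; exists q, s; rewrite unlock. Qed.

Lemma Rev_ge0 : 0 <= Rev P X.
Proof. by have := le_Rev (mechanism0 R k); rewrite expectation_cst. Qed.

Section bounded_valuation.
Context (M : R).
Hypotheses (mX : measurable_fun setT X) (X0 : forall t, nonneg_val (X t)).
Hypotheses (M0 : (0 <= M)%R) (X_bd : {ae P, forall t, norm1 (X t) <= M}%R).

Lemma expectation_payment_ub q s : mechanism q s -> 'E_P[s \o X] <= M%:E.
Proof.
move=> mech; have s0 := payment_zerot_le0 mech.
apply: (expectation_le_ub (a := s zerot)) => /=.
- by apply: measurableT_comp mX; case: mech.
- by move=> t; have := payment_zerot_le mech (X0 t).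
- by apply: filterS X_bd => t Xt; have := payment_le_norm1 mech (X0 t); lra.
- (* [lra] ignores section hypotheses, hence the explicit [have := M0]. *)
  by have := M0; lra.
Qed.

Lemma Rev_le : Rev P X <= M%:E.
Proof.
apply: ge_ereal_sup => _ [q [s [mech ->]]].
by have := expectation_payment_ub mech; rewrite unlock.
Qed.

Lemma Rev_fin_num : Rev P X \is a fin_num.
Proof. by rewrite ge0_fin_numE ?Rev_ge0 // (le_lt_trans Rev_le) ?ltry. Qed.

End bounded_valuation.

End revenue.

Definition prohorov_le (R : realType) (k : nat)
    d2 (T2 : measurableType d2) (P2 : probability T2 R) (Y : T2 -> k.-tuple R)
    d1 (T1 : measurableType d1) (P1 : probability T1 R) (X : T1 -> k.-tuple R)
    (rho : R) :=
  forall A : set (k.-tuple R), measurable A ->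
    (P2 (Y @^-1` A) <= P1 (X @^-1` ball1 A rho) + rho%:E)%E.

Section prohorov.
Context (R : realType) (k : nat).
Context d1 (T1 : measurableType d1) (P1 : probability T1 R) (X : T1 -> k.-tuple R).
Context d2 (T2 : measurableType d2) (P2 : probability T2 R) (Y : T2 -> k.-tuple R).
Context (M : R).
Hypotheses (mX : measurable_fun setT X) (mY : measurable_fun setT Y).
Hypotheses (X0 : forall t, nonneg_val (X t)) (Y0 : forall t, nonneg_val (Y t)).
Hypotheses (M0 : 0 <= M) (X_bd : {ae P1, forall t, norm1 (X t) <= M})
  (Y_bd : {ae P2, forall t, norm1 (Y t) <= M}).

Section rescaled_mechanism.
Context (q : k.-tuple R -> k.-tuple R) (s : k.-tuple R -> R) (e : R).
Hypotheses (mech : mechanism q s) (e0 : 0 < e) (e1 : e < 1).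
Let c := (1 - e)^-1.
Let c0 : 0 < c. Proof. by rewrite invr_gt0 subr_gt0. Qed.
Let ms : measurable_fun setT s. Proof. by case: mech. Qed.
Let mg : measurable_fun setT (s \o scalet c \o X).
Proof. exact: measurableT_comp ms (measurableT_comp (measurable_scalet c) mX). Qed.
Let g_lb t : s zerot <= (s \o scalet c \o X) t.
Proof. by have := payment_zerot_le mech (nonneg_val_scalet (ltW c0) (X0 t)). Qed.
Let g_ub : {ae P1, forall t, (s \o scalet c \o X) t <= c * M + s zerot}.
Proof.
apply: filterS X_bd => t Xt /=.
have := payment_le_norm1 mech (nonneg_val_scalet (ltW c0) (X0 t)).
rewrite norm1Z; last exact: ltW.
have := ler_wpM2l (ltW c0) Xt; lra.
Qed.
Let Lg : s \o scalet c \o X \in Lfun P1 1. Proof. exact: bounded_Lfun1 mg g_lb g_ub. Qed.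
Let mf : measurable_fun setT (s \o Y). Proof. exact: measurableT_comp ms mY. Qed.
Let f_lb t : s zerot <= (s \o Y) t.
Proof. by have := payment_zerot_le mech (Y0 t). Qed.
Let f_ub : {ae P2, forall t, (s \o Y) t <= M + s zerot}.
Proof.
by apply: filterS Y_bd => t Yt; have := payment_le_norm1 mech (Y0 t); rewrite /=; lra.
Qed.
Let Lf : s \o Y \in Lfun P2 1. Proof. exact: bounded_Lfun1 mf f_lb f_ub. Qed.

Lemma prohorov_payment_tail_le : prohorov_le P2 Y P1 X (e ^+ 2) -> forall r : R,
  (P2 [set t | (r < s (Y t) - s zerot)%R] <=
   P1 [set t | (r < s (scalet c (X t)) - (s zerot - e))%R] + (e ^+ 2)%:E)%E.
Proof.
move=> hP r; pose A := [set y | nonneg_val y /\ r < s y - s zerot].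
have mA : measurable A.
  apply: measurableI; first exact: measurable_nonneg_val.
  by apply: measurable_superlevel_set; apply: measurable_funB.
have -> : [set t | r < s (Y t) - s zerot] = Y @^-1` A.
  by apply/seteqP; split => t /= => [Yt|[]//]; split.
apply: le_trans (hP A mA) _; rewrite leeD2r // le_measure ?inE //.
- by rewrite -[X in measurable X]setTI; apply: mX => //; exact: measurable_ball1.
- by apply: measurable_superlevel_set; apply: measurable_funB => //; exact: mg.
move=> t [y [y0 ry] /= Xy].
have Xy2 : dist1 (X t) y < e * e by rewrite -expr2.
have := payment_scalet_ge mech e0 e1 (X0 t) y0; rewrite -/c => rescale_ge.
have : 0 < e * (s (scalet c (X t)) - s y + e) by lra.
by rewrite pmulr_rgt0 //; lra.
Qed.

Lemma expectation_payment_le_rescaled : prohorov_le P2 Y P1 X (e ^+ 2) ->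
  ('E_P2[s \o Y] <= 'E_P1[s \o scalet c \o X] + (e + M * e ^+ 2)%:E)%E.
Proof.
move=> hP; have := @expectation_le_of_tail_le R _ _ P1 _ _ P2
  (s \o scalet c \o X \- cst (s zerot - e)) (s \o Y \- cst (s zerot)) M (e ^+ 2).
rewrite !expectationB ?Lfun_cst // !expectation_cst.
move: (expectation_fin_num Lf) (expectation_fin_num Lg).
case: ('E_P2[_])%E => // a _; case: ('E_P1[_])%E => // b _.
rewrite -!EFinB -!EFinD !lee_fin => tail_le.
suff : a - s zerot <= b - (s zerot - e) + M * e ^+ 2 by lra.
apply: tail_le => //.
- exact: measurable_funB.
- exact: measurable_funB.
- exact: sqr_ge0.
- by move=> t /=; have := g_lb t; have := e0; rewrite /=; lra.
- by move=> t /=; have := f_lb t; rewrite /=; lra.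
- by apply: filterS f_ub => t /=; lra.
- by move=> r _; exact: prohorov_payment_tail_le.
Qed.

Lemma Rev_ge_rescaled : ((1 - e)%:E * 'E_P1[s \o scalet c \o X] <= Rev P1 X)%E.
Proof.
rewrite -expectationZl //.
by have := le_Rev P1 X (mechanism_scalet mech c0); rewrite /c invrK.
Qed.

Lemma expectation_payment_le_Rev_add : prohorov_le P2 Y P1 X (e ^+ 2) ->
  ('E_P2[s \o Y] <= Rev P1 X + ((2 * M + 1) * e)%:E)%E.
Proof.
move=> hP; have := expectation_payment_le_rescaled hP; have := Rev_ge_rescaled.
have := expectation_payment_ub mY Y0 M0 Y_bd mech.
move: (Rev_fin_num mX X0 M0 X_bd) (expectation_fin_num Lf) (expectation_fin_num Lg).
case: (Rev P1 X) => // r _; case: ('E_P2[_])%E => // a _; case: ('E_P1[_])%E => // b _.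
rewrite -!EFinD -!EFinM !lee_fin => aM br ab.
(* (1 - e) (E s(Y) - e - M e^2) <= (1 - e) E s(X / (1 - e)) <= Rev X *)
have e0' := e0; have e1' := e1; have M0' := M0.
have : (1 - e) * (a - e - M * e ^+ 2) <= (1 - e) * b by apply: ler_wpM2l; lra.
have : e * a <= e * M by apply: ler_wpM2l; lra.
have : M * e ^+ 2 <= M * e by apply: ler_wpM2l => //; rewrite expr2 ger_pMr //; lra.
have : 0 <= M * e ^+ 3 by rewrite mulr_ge0 ?exprn_ge0 //; lra.
have : 0 <= e ^+ 2 by exact: sqr_ge0.
rewrite !exprS expr0 !mulr1; nra.
Qed.

End rescaled_mechanism.

Lemma Rev_le_add_prohorov rho : 0 < rho -> prohorov_le P2 Y P1 X rho ->
  (Rev P2 Y <= Rev P1 X + ((2 * M + 1) * Num.sqrt rho)%:E)%E.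
Proof.
move=> rho0 hP; have M0' := M0.
have [rho_ge1|rho_lt1] := leP 1 rho.
  have e1 : 1 <= Num.sqrt rho by rewrite -sqrtr1 ler_wsqrtr.
  apply: le_trans (Rev_le mY Y0 M0 Y_bd) _.
  by rewrite -[M%:E]add0e leeD ?Rev_ge0 // lee_fin; nra.
have e0 : 0 < Num.sqrt rho by rewrite sqrtr_gt0.
have e1 : Num.sqrt rho < 1 by rewrite -sqrtr1 ltr_sqrt.
apply: ge_ereal_sup => _ [q [s [mech ->]]].
have := expectation_payment_le_Rev_add mech e0 e1; rewrite sqr_sqrtr ?(ltW rho0) //.
by move/(_ hP); rewrite unlock.
Qed.

End prohorov.

Lemma le_mul_sqrt_inf (R : realType) (S : set R) (a C : R) : 0 < C -> S !=set0 ->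
  (forall rho, S rho -> 0 <= rho /\ a <= C * Num.sqrt rho) ->
  a <= C * Num.sqrt (inf S).
Proof.
move=> C0 S0 hS; have [a_le0|a_gt0] := leP a 0.
  by rewrite (le_trans a_le0) // mulr_ge0 ?sqrtr_ge0 // ltW.
have aC0 : 0 <= C^-1 * a by rewrite mulr_ge0 // ?invr_ge0 ltW.
rewrite -ler_pdivrMl // -[C^-1 * a]ger0_norm // -sqrtr_sqr; apply: ler_wsqrtr.
suff lbS : lbound S ((C^-1 * a) ^+ 2) by have := lb_le_inf S0 lbS.
move=> rho /hS [rho0 a_le].
by rewrite -(sqr_sqrtr rho0) ler_pXn2r ?nnegrE ?sqrtr_ge0 // ler_pdivrMl.
Qed.

Lemma prohorov_le1 (R : realType) (k : nat)
    d2 (T2 : measurableType d2) (P2 : probability T2 R) (Y : T2 -> k.-tuple R)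
    d1 (T1 : measurableType d1) (P1 : probability T1 R) (X : T1 -> k.-tuple R) :
  measurable_fun setT Y -> prohorov_le P2 Y P1 X 1.
Proof.
move=> mY A mA; apply: le_trans (probability_le1 P2 _) _.
  by rewrite -[X in measurable X]setTI; exact: mY.
by rewrite leeDr.
Qed.

Theorem proposition6 (R : realType) (k : nat) (hk : (1 <= k)%N)
  (d1 : measure_display) (T1 : measurableType d1) (P1 : probability T1 R)
  (X : T1 -> k.-tuple R)
  (d2 : measure_display) (T2 : measurableType d2) (P2 : probability T2 R)
  (Y : T2 -> k.-tuple R)
  (M : R)
  (mX : measurable_fun setT X) (mY : measurable_fun setT Y)
  (X_nonneg : forall t, nonneg_val (X t)) (Y_nonneg : forall t, nonneg_val (Y t))
  (hM : 1 <= M)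
  (X_bd : {ae P1, forall t, norm1 (X t) <= M})
  (Y_bd : {ae P2, forall t, norm1 (Y t) <= M}) :
  (`| Rev P1 X - Rev P2 Y | <=
     ((2 * M + 1) * Num.sqrt (Dist P1 X P2 Y))%:E)%E.
Proof.
(* The bound holds for every k. *)
have M0 : 0 <= M by lra.
have [x Rev_X] : exists x, Rev P1 X = x%:E.
  by exists (fine (Rev P1 X)); rewrite fineK // (Rev_fin_num mX X_nonneg M0 X_bd).
have [y Rev_Y] : exists y, Rev P2 Y = y%:E.
  by exists (fine (Rev P2 Y)); rewrite fineK // (Rev_fin_num mY Y_nonneg M0 Y_bd).
rewrite Rev_X Rev_Y -EFinB abse_EFin lee_fin /Dist.
apply: le_mul_sqrt_inf; first lra.
  by exists 1; split => // A mA; split; exact: prohorov_le1.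
move=> rho [rho0 hP]; split; first exact: ltW.
have := Rev_le_add_prohorov mX mY X_nonneg Y_nonneg M0 X_bd Y_bd rho0
  (fun A mA => (hP A mA).2).
have := Rev_le_add_prohorov mY mX Y_nonneg X_nonneg M0 Y_bd X_bd rho0
  (fun A mA => (hP A mA).1).
rewrite Rev_X Rev_Y -!EFinD !lee_fin => h1 h2.
by rewrite ler_norml; apply/andP; split; lra.
Qed.
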